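(* Let $\triangle PQR$ be a (closed, filled) triangle in $D$ with $\delta(P,Q,R)=\frac{1}{2}\Delta_1'(P,Q)$. Then $\rho(\psi_{\triangle PQR})=\frac{2}{5}$.
   Context: $D$ is the open unit disk in $\mathbb R^2$, $S^1$ its boundary circle identified with $\mathbb R/\mathbb Z$ via the counterclockwise normalized angle. For a closed convex $U\subset D$ and $v\in S^1$, $\psi_U(v)$ is the point $w\in S^1\setminus\{v\}$ such that the line $vw$ meets $U$ and $U$ lies in the closed half-plane to the left of the directed line from $v$ to $w$; it is an orientation-preserving homeomorphism of $S^1$. For such $f$, $\rho(f)=\lim_{n\to\infty}(\overline f^n(x)-x)/n$ with $\overline f$ the lift to $\mathbb R$ satisfying $\overline f(0)\in[0,1)$. Regard $D$ as the Beltrami–Klein model (hyperbolic lines are chords). For distinct $P,Q\in D$ with chord endpoints $v_1,v_2\in S^1$, $d'(P,Q)=\tfrac12\left|\log\frac{|v_1Q||v_2P|}{|v_1P||v_2Q|}\right|$; $\Delta_n'(P,Q)=\log\frac{e^{n d'(P,Q)}+1}{e^{n d'(P,Q)}-1}$ for $n\in\mathbb Z_{>0}$; $\delta(P,Q,R)=\min\{d'(R,S): S \text{ on the chord through } P,Q\}$. *)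

From Stdlib Require Import Reals Lra.
Open Scope R_scope.

Definition pt := (R * R)%type.

Definition sq_norm (p : pt) : R := fst p * fst p + snd p * snd p.
Definition in_D (p : pt) : Prop := sq_norm p < 1.
Definition on_S1 (p : pt) : Prop := sq_norm p = 1.

Definition psub (p q : pt) : pt := (fst p - fst q, snd p - snd q).
Definition padd (p q : pt) : pt := (fst p + fst q, snd p + snd q).
Definition pscale (t : R) (p : pt) : pt := (t * fst p, t * snd p).
Definition dot (p q : pt) : R := fst p * fst q + snd p * snd q.

Definition edist (p q : pt) : R := sqrt (sq_norm (psub p q)).

(* S^1 = R/Z via the counterclockwise normalized angle *)
Definition circ (t : R) : pt := (cos (2 * PI * t), sin (2 * PI * t)).

(* cross o a b > 0 iff b is strictly to the left of the directed line o -> a *)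
Definition cross (o a b : pt) : R :=
  (fst a - fst o) * (snd b - snd o) - (snd a - snd o) * (fst b - fst o).

Definition filled_triangle (A B C : pt) (u : pt) : Prop :=
  exists a b c : R, 0 <= a /\ 0 <= b /\ 0 <= c /\ a + b + c = 1 /\
    u = padd (pscale a A) (padd (pscale b B) (pscale c C)).

(* w = psi_U(v): w on S^1, w <> v, the line vw meets U, and U lies in the
   closed half-plane to the left of the directed line from v to w *)
Definition psi_rel (U : pt -> Prop) (v w : pt) : Prop :=
  on_S1 v /\ on_S1 w /\ w <> v /\
  (exists u, U u /\ cross v w u = 0) /\
  (forall u, U u -> 0 <= cross v w u).

Definition is_lift_psi (U : pt -> Prop) (F : R -> R) : Prop :=
  continuity F /\ 0 <= F 0 < 1 /\
  forall x, psi_rel U (circ x) (circ (F x)).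

(* endpoints v1, v2 on S^1 of the chord through distinct P, Q:
   P + t (Q - P) with |P + t (Q - P)|^2 = 1 *)
Definition chord_t (P Q : pt) (sgn : R) : R :=
  let a := sq_norm (psub Q P) in
  let b := 2 * dot P (psub Q P) in
  let c := sq_norm P - 1 in
  (- b + sgn * sqrt (b * b - 4 * a * c)) / (2 * a).
Definition chord_end1 (P Q : pt) : pt := padd P (pscale (chord_t P Q (-1)) (psub Q P)).
Definition chord_end2 (P Q : pt) : pt := padd P (pscale (chord_t P Q 1) (psub Q P)).

(* hyperbolic (Klein model) distance d'; d'(P,P) := 0 *)
Definition dprime (P Q : pt) : R :=
  if Rle_dec (sq_norm (psub Q P)) 0 then 0 else
  let v1 := chord_end1 P Q in
  let v2 := chord_end2 P Q in
  / 2 * Rabs (ln ((edist v1 Q * edist v2 P) / (edist v1 P * edist v2 Q))).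

Definition Deltaprime (n : nat) (P Q : pt) : R :=
  ln ((exp (INR n * dprime P Q) + 1) / (exp (INR n * dprime P Q) - 1)).

Definition on_chord (P Q S : pt) : Prop := in_D S /\ cross P Q S = 0.

Definition delta_is (P Q C : pt) (m : R) : Prop :=
  (exists S, on_chord P Q S /\ dprime C S = m) /\
  (forall S, on_chord P Q S -> m <= dprime C S).

(* Seen from a point [v] of the circle, the triangle is supported by the chord from [v] through
   the vertex whose chord from [v] ends first counterclockwise; so a lift of [psi] is [x] plus
   the least of three vertex angle maps, a monotone lift of degree one, and every lift of [psi]
   equals it.  Put the chord [PQ] in the form [A + s (B - A)] with [A], [B] on the circle.  In
   the Klein model [4 sinh^2 d'(X, Y)] is a rational function of the coordinates, and the point
   of the chord closest to [C] comes from AM-GM; so [delta = Delta'_1 / 2] becomes the identity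
   [4 (1 - C.A) (1 - C.B) (q - p) = q (1 - p) (1 - |C|^2) |B - A|^2].  This identity is exactly
   what closes the chain of supporting chords X0 -> A -> B -> Y -> Z -> X0, where X0 and Y are
   the far ends of the chords through [C] from [A] and [B], and Z that of the chord through [P]
   from Y: an orbit going twice around the circle in five steps, which forces rotation number
   2/5. *)

From Stdlib Require Import Reals Lra Lia Psatz ZArith FunctionalExtensionality.
Open Scope R_scope.

(** * The circle *)

Lemma circ_S1 t : on_S1 (circ t).
Proof.
  unfold on_S1, sq_norm, circ; simpl.
  pose proof (sin2_cos2 (2 * PI * t)); unfold Rsqr in *; lra.
Qed.

Lemma circ_shift_nat t (k : nat) : circ (t + INR k) = circ t.
Proof.
  unfold circ. replace (2 * PI * (t + INR k)) with (2 * PI * t + 2 * INR k * PI) by ring.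
  now rewrite cos_period, sin_period.
Qed.

Lemma circ_shift_Z t (k : Z) : circ (t + IZR k) = circ t.
Proof.
  destruct (Z_le_gt_dec 0 k) as [Hk | Hk].
  - rewrite <- (Z2Nat.id k Hk), <- INR_IZR_INZ. apply circ_shift_nat.
  - rewrite <- (circ_shift_nat (t + IZR k) (Z.to_nat (- k))).
    rewrite INR_IZR_INZ, Z2Nat.id, opp_IZR by lia. f_equal; ring.
Qed.

Lemma circ_shift1 t : circ (t + 1) = circ t.
Proof. exact (circ_shift_Z t 1). Qed.

Lemma circ_shift2 t : circ (t + 2) = circ t.
Proof. exact (circ_shift_Z t 2). Qed.

Lemma sq_norm_circ_sub t s : sq_norm (psub (circ t) (circ s)) = 4 * sin (PI * (t - s)) ^ 2.
Proof.
  unfold sq_norm, psub, circ; simpl.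
  assert (Hc : cos (2 * PI * t - 2 * PI * s) = 1 - 2 * sin (PI * (t - s)) * sin (PI * (t - s))).
  { rewrite <- cos_2a_sin. f_equal. ring. }
  rewrite cos_minus in Hc.
  pose proof (sin2_cos2 (2 * PI * t)); pose proof (sin2_cos2 (2 * PI * s)); unfold Rsqr in *.
  nra.
Qed.

Lemma circ_inj_Z t s : circ t = circ s -> exists k : Z, t - s = IZR k.
Proof.
  intro E.
  assert (Hs : sin (PI * (t - s)) = 0).
  { assert (H0 : sq_norm (psub (circ t) (circ s)) = 0)
      by (rewrite E; unfold sq_norm, psub; simpl; ring).
    rewrite sq_norm_circ_sub in H0. nra. }
  destruct (sin_eq_0_0 _ Hs) as [k Hk]. exists k.
  pose proof PI_RGT_0. apply Rmult_eq_reg_l with PI; [rewrite Hk; ring | lra].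
Qed.

Lemma IZR_between_m1_1 (k : Z) : -1 < IZR k < 1 -> IZR k = 0.
Proof. intros [H1 H2]. apply lt_IZR in H1, H2. now replace k with 0%Z by lia. Qed.

Lemma circ_inj t s : circ t = circ s -> -1 < t - s < 1 -> t = s.
Proof.
  intros E Hb. destruct (circ_inj_Z _ _ E) as [k Hk].
  rewrite Hk in Hb. apply IZR_between_m1_1 in Hb. lra.
Qed.

Lemma circ_neq t s : 0 < t - s < 1 -> circ t <> circ s.
Proof. intros Hb E. apply circ_inj in E; lra. Qed.

Lemma sin_triple_sum x y :
  sin (2 * x) + sin (2 * y) - sin (2 * x + 2 * y) = 4 * sin x * sin y * sin (x + y).
Proof.
  replace (2 * x + 2 * y) with (2 * (x + y)) by ring.
  rewrite !sin_2a, sin_plus, cos_plus.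
  pose proof (sin2_cos2 x) as Hx; pose proof (sin2_cos2 y) as Hy; unfold Rsqr in *.
  set (cx := cos x) in *; set (sx := sin x) in *; set (cy := cos y) in *; set (sy := sin y) in *.
  apply Rminus_diag_uniq.
  transitivity (2 * sx * cx * (1 - cy * cy - sy * sy) + 2 * sy * cy * (1 - cx * cx - sx * sx)).
  - ring.
  - replace (1 - cy * cy - sy * sy) with 0 by lra. replace (1 - cx * cx - sx * sx) with 0 by lra.
    ring.
Qed.

Lemma cross_circ a b c :
  cross (circ a) (circ b) (circ c) = 4 * sin (PI * (b - a)) * sin (PI * (c - b)) * sin (PI * (c - a)).
Proof.
  set (al := 2 * PI * a). set (x := PI * (b - a)). set (y := PI * (c - b)).
  assert (Hb : 2 * PI * b = al + 2 * x) by (unfold al, x; ring).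
  assert (Hc : 2 * PI * c = al + (2 * x + 2 * y)) by (unfold al, x, y; ring).
  assert (Hca : PI * (c - a) = x + y) by (unfold x, y; ring).
  assert (Hy : sin (2 * y) = sin (2 * x + 2 * y) * cos (2 * x) - cos (2 * x + 2 * y) * sin (2 * x)).
  { rewrite <- sin_minus. f_equal. ring. }
  unfold cross, circ; simpl. rewrite Hb, Hc, Hca. fold al.
  rewrite <- sin_triple_sum, Hy, (cos_plus al), (sin_plus al), (cos_plus al), (sin_plus al).
  pose proof (sin2_cos2 al) as Hal. unfold Rsqr in Hal.
  transitivity ((sin al * sin al + cos al * cos al)
    * ((cos (2 * x) - 1) * sin (2 * x + 2 * y) - sin (2 * x) * (cos (2 * x + 2 * y) - 1))).
  - ring.
  - rewrite Hal. ring.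
Qed.

Lemma cross_circ_pos a b c : a < b -> b < c -> c < a + 1 -> 0 < cross (circ a) (circ b) (circ c).
Proof.
  intros Hab Hbc Hca. rewrite cross_circ. pose proof PI_RGT_0.
  assert (0 < sin (PI * (b - a))) by (apply sin_gt_0; nra).
  assert (0 < sin (PI * (c - b))) by (apply sin_gt_0; nra).
  assert (0 < sin (PI * (c - a))) by (apply sin_gt_0; nra).
  repeat apply Rmult_lt_0_compat; lra.
Qed.

Lemma cross_cyc o a b : cross o a b = cross a b o.
Proof. unfold cross; ring. Qed.

Lemma cross_swap o a b : cross o a b = - cross o b a.
Proof. unfold cross; ring. Qed.

Lemma cross_swap_base o a b : cross a o b = - cross o a b.
Proof. unfold cross; ring. Qed.

Lemma cross_same o a : cross o a a = 0.
Proof. unfold cross; ring. Qed.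

Lemma cross_base o a : cross o a o = 0.
Proof. unfold cross; ring. Qed.

Lemma cross_affine o a v w l :
  cross o a (padd v (pscale l (psub w v))) = (1 - l) * cross o a v + l * cross o a w.
Proof. unfold cross, padd, pscale, psub; simpl; ring. Qed.

Lemma cross_affine_mid o v w k b :
  cross o (padd v (pscale k (psub w v))) b = (1 - k) * cross o v b + k * cross o w b.
Proof. unfold cross, padd, pscale, psub; simpl; ring. Qed.

Lemma cross_chord_points A B p q S :
  cross (padd A (pscale p (psub B A))) (padd A (pscale q (psub B A))) S = (q - p) * cross A B S.
Proof. unfold cross, padd, pscale, psub; simpl; ring. Qed.

Lemma circ_angle_order a u w : a < u < a + 1 -> a < w < a + 1 ->
  0 < cross (circ a) (circ u) (circ w) -> u < w.
Proof.
  intros Hu Hw Hc. destruct (Rtotal_order u w) as [H | [H | H]]; auto.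
  - subst. rewrite cross_same in Hc. lra.
  - assert (0 < cross (circ a) (circ w) (circ u)) by (apply cross_circ_pos; lra).
    rewrite cross_swap in Hc. lra.
Qed.

(* The stereographic parameter [r = y / (1 + x)] of [(x, y)] is [tan] of half its angle. *)
Lemma S1_circ w : on_S1 w -> exists t, w = circ t.
Proof.
  destruct w as [x y]. unfold on_S1, sq_norm; simpl. intro H.
  pose proof PI_RGT_0.
  destruct (Req_dec x (-1)) as [Hx | Hx].
  - exists (/ 2). subst x. replace y with 0 by nra.
    unfold circ. replace (2 * PI * / 2) with PI by field. now rewrite cos_PI, sin_PI.
  - assert (Hx1 : 0 < 1 + x) by nra.
    set (r := y / (1 + x)). exists (atan r / PI).
    unfold circ. replace (2 * PI * (atan r / PI)) with (2 * atan r) by (field; lra).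
    rewrite cos_2a, sin_2a, cos_atan, sin_atan. unfold Rsqr.
    assert (Hss : sqrt (1 + r * r) * sqrt (1 + r * r) = 1 + r * r) by (apply sqrt_sqrt; nra).
    assert (Hy : y = r * (1 + x)) by (unfold r; field; lra).
    assert (Hr2 : r * r = (1 - x) / (1 + x)).
    { apply Rmult_eq_reg_r with ((1 + x) * (1 + x)); [|nra].
      field_simplify; [|lra]. rewrite Hy in H. nra. }
    f_equal.
    + transitivity ((1 - r * r) / (sqrt (1 + r * r) * sqrt (1 + r * r))); [|field; nra].
      rewrite Hss, Hr2. field. lra.
    + transitivity (2 * r / (sqrt (1 + r * r) * sqrt (1 + r * r))); [|field; nra].
      rewrite Hss, Hr2, Hy. field. lra.
Qed.

Lemma S1_circ_in w a : on_S1 w -> w <> circ a -> exists t, w = circ t /\ a < t < a + 1.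
Proof.
  intros Hw Hne. destruct (S1_circ w Hw) as [t Ht].
  destruct (archimed (a - t)) as [H1 H2].
  exists (t + IZR (up (a - t))). rewrite circ_shift_Z. split; [exact Ht|].
  split; [lra|].
  destruct (Rle_lt_or_eq_dec _ _ H2) as [Hlt | Heq]; [lra|].
  exfalso. apply Hne. rewrite Ht, <- (circ_shift_Z t (up (a - t))).
  replace (t + IZR (up (a - t))) with (a + 1) by lra. apply circ_shift1.
Qed.

(** * The far end of a chord *)

Lemma pt_eq_or_neq (X Y : pt) : X = Y \/ X <> Y.
Proof.
  destruct X as [x1 x2], Y as [y1 y2].
  destruct (Req_dec x1 y1), (Req_dec x2 y2); [left; congruence | right; congruence ..].
Qed.

Lemma sq_norm_pos_neq X Y : X <> Y -> 0 < sq_norm (psub Y X).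
Proof.
  intro H. destruct X as [x1 x2], Y as [y1 y2]. unfold sq_norm, psub; simpl.
  destruct (Req_dec x1 y1), (Req_dec x2 y2); subst; [exfalso; auto | nra ..].
Qed.

Lemma dot_S1_D_lt1 v M : on_S1 v -> in_D M -> dot v M < 1.
Proof.
  destruct v as [c s], M as [m1 m2]. unfold on_S1, in_D, sq_norm, dot; simpl. intros Hv HM.
  pose proof (pow2_ge_0 (c * m2 - s * m1)). nra.
Qed.

Lemma S1_D_sq_norm_pos v M : on_S1 v -> in_D M -> 0 < sq_norm (psub M v).
Proof. intros Hv HM. apply sq_norm_pos_neq. intros <-. unfold in_D, on_S1 in *. lra. Qed.

(* The chord from [v] through [M] ends at [v + k (M - v)], [k] the nonzero root of [|v + k (M - v)|^2 = 1]. *)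
Definition far_end (M v : pt) : pt :=
  padd v (pscale (2 * (1 - dot v M) / sq_norm (psub M v)) (psub M v)).

Definition far_ratio (M v : pt) : R := sq_norm (psub M v) / (2 * (1 - dot v M)).

Lemma far_end_S1 v M : on_S1 v -> in_D M -> on_S1 (far_end M v).
Proof.
  intros Hv HM. pose proof (dot_S1_D_lt1 v M Hv HM). pose proof (S1_D_sq_norm_pos v M Hv HM) as HN.
  destruct v as [c s], M as [m1 m2]. unfold on_S1, in_D, far_end, sq_norm, dot, psub, padd, pscale in *; simpl in *.
  set (N := (m1 - c) * (m1 - c) + (m2 - s) * (m2 - s)) in *.
  set (k := 2 * (1 - (c * m1 + s * m2)) / N).
  assert (Hk : k * N = 2 * (1 - (c * m1 + s * m2))) by (unfold k; field; lra).
  transitivity ((c * c + s * s) + 2 * k * (c * (m1 - c) + s * (m2 - s)) + k * (k * N)).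
  - unfold N. ring.
  - replace (c * (m1 - c) + s * (m2 - s)) with (c * m1 + s * m2 - (c * c + s * s)) by ring.
    rewrite Hk, Hv. ring.
Qed.


Lemma far_ratio_bounds v M : on_S1 v -> in_D M -> 0 < far_ratio M v < 1.
Proof.
  intros Hv HM. pose proof (dot_S1_D_lt1 v M Hv HM). pose proof (S1_D_sq_norm_pos v M Hv HM).
  destruct v as [c s], M as [m1 m2]. unfold on_S1, in_D, far_ratio, sq_norm, dot, psub in *; simpl in *.
  split.
  - apply Rdiv_lt_0_compat; nra.
  - apply (Rmult_lt_reg_r (2 * (1 - (c * m1 + s * m2)))); [lra|].
    unfold Rdiv. rewrite Rmult_assoc, Rinv_l by lra. nra.
Qed.

Lemma far_end_affine v M : on_S1 v -> in_D M ->
  M = padd v (pscale (far_ratio M v) (psub (far_end M v) v)).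
Proof.
  intros Hv HM. pose proof (dot_S1_D_lt1 v M Hv HM). pose proof (S1_D_sq_norm_pos v M Hv HM).
  destruct v as [c s], M as [m1 m2]. unfold on_S1, in_D, far_ratio, far_end, sq_norm, dot, psub, padd, pscale in *; simpl in *.
  f_equal; field; lra.
Qed.

Lemma far_end_neq v M : on_S1 v -> in_D M -> far_end M v <> v.
Proof.
  intros Hv HM E. pose proof (far_end_affine v M Hv HM) as EM. rewrite E in EM.
  assert (EMv : M = v) by (rewrite EM; destruct v; unfold padd, pscale, psub; simpl; f_equal; ring).
  unfold in_D, on_S1 in *. rewrite EMv in HM. lra.
Qed.

Lemma far_end_of_chord v w M l : on_S1 v -> on_S1 w -> v <> w -> l <> 0 ->
  M = padd v (pscale l (psub w v)) -> far_end M v = w.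
Proof.
  intros Hv Hw Hvw Hl ->. pose proof (sq_norm_pos_neq v w Hvw) as Hd.
  destruct v as [c s], w as [a b]. unfold on_S1, far_end, sq_norm, dot, padd, pscale, psub in *; simpl in *.
  assert (E1 : 1 - (c * (c + l * (a - c)) + s * (s + l * (b - s)))
               = l * ((a - c) * (a - c) + (b - s) * (b - s)) / 2) by nra.
  assert (E2 : (c + l * (a - c) - c) * (c + l * (a - c) - c) + (s + l * (b - s) - s) * (s + l * (b - s) - s)
               = l * l * ((a - c) * (a - c) + (b - s) * (b - s))) by ring.
  rewrite E1, E2. f_equal; field; lra.
Qed.

Lemma far_end_invol v M : on_S1 v -> in_D M -> far_end M (far_end M v) = v.
Proof.
  intros Hv HM. pose proof (far_ratio_bounds v M Hv HM).
  apply far_end_of_chord with (l := 1 - far_ratio M v).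
  - exact (far_end_S1 v M Hv HM).
  - exact Hv.
  - exact (far_end_neq v M Hv HM).
  - lra.
  - rewrite (far_end_affine v M Hv HM) at 1.
    destruct v as [v1 v2], (far_end M (v1, v2)) as [w1 w2].
    unfold padd, pscale, psub; simpl. f_equal; ring.
Qed.

Lemma cross_far_end v w M : on_S1 v -> in_D M ->
  cross v w M = far_ratio M v * cross v w (far_end M v).
Proof.
  intros Hv HM. rewrite (far_end_affine v M Hv HM) at 1.
  rewrite cross_affine, cross_base. ring.
Qed.

(* [chord_slope M x] is the tangent of the direction of [M - circ x], measured from the angle
   [2 PI x]; by the inscribed angle theorem the far end of the chord is then at angle
   [2 PI x + PI + 2 atan (chord_slope M x)]. *)
Definition chord_slope (M : pt) (x : R) : R :=
  (sin (2 * PI * x) * fst M - cos (2 * PI * x) * snd M)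
  / (1 - (cos (2 * PI * x) * fst M + sin (2 * PI * x) * snd M)).

Definition far_angle (M : pt) (x : R) : R := / 2 + atan (chord_slope M x) / PI.

Lemma far_angle_bounds M x : 0 < far_angle M x < 1.
Proof.
  unfold far_angle. pose proof (atan_bound (chord_slope M x)). pose proof PI_RGT_0.
  assert (- / 2 < atan (chord_slope M x) / PI < / 2).
  { split; apply (Rmult_lt_reg_r PI); try lra; field_simplify; lra. }
  lra.
Qed.

Lemma far_angle_continuous M : in_D M -> continuity (far_angle M).
Proof.
  intro HM. unfold far_angle.
  assert (Hslope : continuity (chord_slope M)).
  { assert (forall x, 1 - (cos (2 * PI * x) * fst M + sin (2 * PI * x) * snd M) <> 0).
    { intro x. pose proof (dot_S1_D_lt1 (circ x) M (circ_S1 x) HM). unfold dot, circ in *; simpl in *. lra. }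
    unfold chord_slope. reg. }
  assert (continuity atan) by (intro; apply derivable_continuous_pt, derivable_pt_atan).
  reg.
Qed.

Lemma far_angle_shift_Z M x (k : Z) : far_angle M (x + IZR k) = far_angle M x.
Proof.
  pose proof (circ_shift_Z x k) as E. unfold circ in E. injection E as Ec Es.
  unfold far_angle, chord_slope. now rewrite Ec, Es.
Qed.

Lemma circ_far_angle M x : in_D M -> circ (x + far_angle M x) = far_end M (circ x).
Proof.
  intro HM. symmetry.
  pose proof (dot_S1_D_lt1 (circ x) M (circ_S1 x) HM) as Hu.
  assert (Hne : circ x <> circ (x + far_angle M x)).
  { intro E. symmetry in E. apply circ_neq in E; auto. pose proof (far_angle_bounds M x). lra. }
  pose proof (circ_S1 x) as Hcs. unfold on_S1, sq_norm, circ in Hcs; simpl in Hcs.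
  destruct M as [m1 m2]. set (c := cos (2 * PI * x)) in *. set (s := sin (2 * PI * x)) in *.
  set (dd := 1 - (c * m1 + s * m2)). set (r := chord_slope (m1, m2) x).
  assert (Hdd : 0 < dd) by (unfold dd; unfold dot, circ in Hu; simpl in Hu; fold c s in Hu; lra).
  assert (Hr : r = (s * m1 - c * m2) / dd) by reflexivity.
  pose proof PI_RGT_0.
  assert (Hsq : sqrt (1 + r²) * sqrt (1 + r²) = 1 + r * r) by (rewrite sqrt_sqrt; unfold Rsqr; nra).
  assert (Hsp : 0 < sqrt (1 + r²)) by (apply sqrt_lt_R0; unfold Rsqr; nra).
  assert (HC2 : cos (2 * atan r) = (1 - r * r) / (1 + r * r)).
  { rewrite cos_2a, cos_atan, sin_atan, <- Hsq. field. lra. }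
  assert (HS2 : sin (2 * atan r) = 2 * r / (1 + r * r)).
  { rewrite sin_2a, cos_atan, sin_atan, <- Hsq. field. lra. }
  assert (Ew : circ (x + far_angle (m1, m2) x)
               = ((2 * s * r - c * (1 - r * r)) / (1 + r * r), (- 2 * c * r - s * (1 - r * r)) / (1 + r * r))).
  { unfold circ.
    replace (2 * PI * (x + far_angle (m1, m2) x)) with ((2 * PI * x + 2 * atan r) + PI)
      by (unfold far_angle; fold r; field; lra).
    rewrite (cos_plus _ PI), (sin_plus _ PI), cos_PI, sin_PI, (cos_plus (2 * PI * x)),
      (sin_plus (2 * PI * x)), HC2, HS2.
    fold c s. f_equal; field; nra. }
  apply far_end_of_chord with (l := dd * (1 + r * r) / 2); auto using circ_S1.
  - assert (0 < dd * (1 + r * r) / 2) by (apply Rdiv_lt_0_compat; nra). lra.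
  - assert (Hden : (s * m1 - c * m2) * (s * m1 - c * m2) + dd * dd <> 0)
      by (pose proof (pow2_ge_0 (s * m1 - c * m2)); nra).
    rewrite Ew. unfold padd, pscale, psub, circ; simpl. fold c s.
    f_equal; [transitivity ((c * c + s * s) * m1) | transitivity ((c * c + s * s) * m2)];
      try (rewrite Hcs; ring); rewrite Hr; unfold dd; field; fold dd; lra.
Qed.

(** * The lift of [psi] for a triangle *)

Lemma filled_triangle_cross P Q C v w u : filled_triangle P Q C u ->
  exists a b c, 0 <= a /\ 0 <= b /\ 0 <= c /\ a + b + c = 1 /\
    cross v w u = a * cross v w P + b * cross v w Q + c * cross v w C.
Proof.
  intros (a & b & c & Ha & Hb & Hc & Hs & ->). exists a, b, c. repeat split; auto.
  replace c with (1 - a - b) by lra.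
  destruct P, Q, C, v, w. unfold cross, padd, pscale; simpl. ring.
Qed.

Lemma filled_triangle_cross_nonneg P Q C v w u : filled_triangle P Q C u ->
  0 <= cross v w P -> 0 <= cross v w Q -> 0 <= cross v w C -> 0 <= cross v w u.
Proof.
  intros Hu HP HQ HC. destruct (filled_triangle_cross P Q C v w u Hu) as (a & b & c & Ha & Hb & Hc & _ & ->).
  pose proof (Rmult_le_pos _ _ Ha HP). pose proof (Rmult_le_pos _ _ Hb HQ).
  pose proof (Rmult_le_pos _ _ Hc HC). lra.
Qed.

Lemma filled_triangle_cross_pos P Q C v w u : filled_triangle P Q C u ->
  0 < cross v w P -> 0 < cross v w Q -> 0 < cross v w C -> 0 < cross v w u.
Proof.
  intros Hu HP HQ HC. destruct (filled_triangle_cross P Q C v w u Hu) as (a & b & c & Ha & Hb & Hc & Hs & ->).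
  destruct (Rle_lt_or_eq_dec 0 a Ha) as [Ha' | <-].
  - pose proof (Rmult_lt_0_compat _ _ Ha' HP).
    pose proof (Rmult_le_pos _ _ Hb (Rlt_le _ _ HQ)). pose proof (Rmult_le_pos _ _ Hc (Rlt_le _ _ HC)). lra.
  - destruct (Rle_lt_or_eq_dec 0 b Hb) as [Hb' | <-].
    + pose proof (Rmult_lt_0_compat _ _ Hb' HQ). pose proof (Rmult_le_pos _ _ Hc (Rlt_le _ _ HC)). lra.
    + replace c with 1 by lra. lra.
Qed.

Lemma filled_triangle_vertices P Q C :
  filled_triangle P Q C P /\ filled_triangle P Q C Q /\ filled_triangle P Q C C.
Proof.
  destruct P, Q, C. unfold filled_triangle, padd, pscale; simpl.
  split; [|split]; [exists 1, 0, 0 | exists 0, 1, 0 | exists 0, 0, 1];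
    repeat split; try lra; f_equal; ring.
Qed.

Lemma cross_far_angle_pos M x t : in_D M -> 0 < t < far_angle M x ->
  0 < cross (circ x) (circ (x + t)) M.
Proof.
  intros HM Ht. rewrite cross_far_end, <- circ_far_angle by auto using circ_S1.
  pose proof (far_ratio_bounds (circ x) M (circ_S1 x) HM). pose proof (far_angle_bounds M x).
  apply Rmult_lt_0_compat; [lra|]. apply cross_circ_pos; lra.
Qed.

Lemma cross_far_angle_neg M x t : in_D M -> far_angle M x < t < 1 ->
  cross (circ x) (circ (x + t)) M < 0.
Proof.
  intros HM Ht. rewrite cross_far_end, <- circ_far_angle, cross_swap by auto using circ_S1.
  pose proof (far_ratio_bounds (circ x) M (circ_S1 x) HM). pose proof (far_angle_bounds M x).
  assert (0 < cross (circ x) (circ (x + far_angle M x)) (circ (x + t))) by (apply cross_circ_pos; lra).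
  nra.
Qed.

Lemma cross_far_angle_zero M x : in_D M -> cross (circ x) (circ (x + far_angle M x)) M = 0.
Proof.
  intro HM. rewrite cross_far_end, <- circ_far_angle by auto using circ_S1.
  rewrite cross_same. ring.
Qed.

Lemma cross_far_angle_nonneg M x t : in_D M -> 0 < t <= far_angle M x ->
  0 <= cross (circ x) (circ (x + t)) M.
Proof.
  intros HM [Ht0 Ht]. destruct (Rle_lt_or_eq_dec _ _ Ht) as [Hlt | ->].
  - left. apply cross_far_angle_pos; auto.
  - right. symmetry. apply cross_far_angle_zero; auto.
Qed.

Definition support_step (P Q C : pt) (x : R) : R :=
  Rmin (far_angle P x) (Rmin (far_angle Q x) (far_angle C x)).

Definition support_lift (P Q C : pt) (x : R) : R := x + support_step P Q C x.

Lemma support_step_spec P Q C x :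
  (support_step P Q C x = far_angle P x \/ support_step P Q C x = far_angle Q x \/
   support_step P Q C x = far_angle C x) /\
  support_step P Q C x <= far_angle P x /\ support_step P Q C x <= far_angle Q x /\
  support_step P Q C x <= far_angle C x.
Proof.
  unfold support_step, Rmin. destruct (Rle_dec (far_angle Q x) (far_angle C x));
  repeat match goal with |- context [Rle_dec ?a ?b] => destruct (Rle_dec a b) end;
    (split; [first [left; reflexivity | right; left; reflexivity | right; right; reflexivity] | lra]).
Qed.

Lemma support_step_bounds P Q C x : 0 < support_step P Q C x < 1.
Proof.
  destruct (support_step_spec P Q C x) as [[-> | [-> | ->]] _]; apply far_angle_bounds.
Qed.

Lemma support_step_swap P Q C x : support_step Q P C x = support_step P Q C x.
Proof.
  unfold support_step, Rmin.
  destruct (Rle_dec (far_angle P x) (far_angle C x)), (Rle_dec (far_angle Q x) (far_angle C x));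
  repeat match goal with |- context [Rle_dec ?a ?b] => destruct (Rle_dec a b) end; lra.
Qed.

Lemma support_lift_shift1 P Q C x : support_lift P Q C (x + 1) = support_lift P Q C x + 1.
Proof. unfold support_lift, support_step. rewrite !(far_angle_shift_Z _ x 1). ring. Qed.

Lemma continuous_integer_valued_zero h : continuity h ->
  (forall x, exists k : Z, h x = IZR k) -> h 0 = 0 -> forall x, h x = 0.
Proof.
  intros Hc Hint H0 x.
  assert (Hhalf : forall z, h z <> / 2 /\ h z <> - / 2).
  { intro z. destruct (Hint z) as [k ->]. split; intro E.
    - assert (0 < IZR k < 1) as [H1 H2] by lra. apply lt_IZR in H1, H2. lia.
    - assert (-1 < IZR k < 0) as [H1 H2] by lra. apply lt_IZR in H1, H2. lia. }
  assert (Hsame_side : forall c, c = / 2 \/ c = - / 2 -> (h x - c) * (h 0 - c) > 0).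
  { intros c Hcase. set (g := fun t => h t - c).
    assert (Hg : continuity g) by (unfold g; reg).
    destruct (Rle_or_lt ((h x - c) * (h 0 - c)) 0) as [Hle | Hgt]; [exfalso | exact Hgt].
    assert (Hz : exists z, g z = 0).
    { destruct (Rle_dec 0 x).
      - destruct (IVT_cor g 0 x Hg) as [z [_ Hz]]; [lra | unfold g; lra | eauto].
      - destruct (IVT_cor g x 0 Hg) as [z [_ Hz]]; [lra | unfold g; lra | eauto]. }
    destruct Hz as [z Hz]. unfold g in Hz. specialize (Hhalf z). destruct Hcase; subst c; lra. }
  destruct (Hint x) as [k Hk].
  pose proof (Hsame_side (/ 2) (or_introl eq_refl)). pose proof (Hsame_side (- / 2) (or_intror eq_refl)).
  rewrite H0 in *. rewrite Hk in *. apply IZR_between_m1_1. nra.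
Qed.

Definition far_lift (M : pt) (x : R) : R := x + far_angle M x.

Lemma far_lift_inj M a b : in_D M -> far_lift M a = far_lift M b -> a = b.
Proof.
  intros HM E.
  assert (Ec : circ (far_lift M a) = circ (far_lift M b)) by now rewrite E.
  unfold far_lift in Ec. rewrite !circ_far_angle in Ec by auto.
  apply (f_equal (far_end M)) in Ec. rewrite !far_end_invol in Ec by auto using circ_S1.
  destruct (circ_inj_Z _ _ Ec) as [k Hk].
  replace a with (b + IZR k) in E by lra. unfold far_lift in E. rewrite far_angle_shift_Z in E.
  lra.
Qed.

Lemma far_lift_continuous M : in_D M -> continuity (far_lift M).
Proof. intro HM. pose proof (far_angle_continuous M HM). unfold far_lift. reg. Qed.

(* An injective continuous map with [f (x + k) = f x + k] cannot decrease: otherwise IVT on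
   [[b, a + k]] produces a second preimage of [f a]. *)
Lemma far_lift_increasing M a b : in_D M -> a < b -> far_lift M a < far_lift M b.
Proof.
  intros HM Hab. destruct (Rtotal_order (far_lift M a) (far_lift M b)) as [H | [H | H]]; auto.
  - apply far_lift_inj in H; auto; lra.
  - exfalso. destruct (archimed (b - a)) as [Hk _]. set (k := up (b - a)) in *.
    assert (Hshift : far_lift M (a + IZR k) = far_lift M a + IZR k)
      by (unfold far_lift; rewrite far_angle_shift_Z; ring).
    set (g := fun t => far_lift M t - far_lift M a).
    assert (Hg : continuity g) by (pose proof (far_lift_continuous M HM); unfold g; reg).
    destruct (IVT g b (a + IZR k) Hg) as [z [Hz Hgz]]; [lra | unfold g; lra | unfold g; lra |].
    unfold g in Hgz. assert (Ez : far_lift M z = far_lift M a) by lra.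
    apply far_lift_inj in Ez; auto. lra.
Qed.

Section SupportLift.
Variables P Q C : pt.
Hypotheses (HP : in_D P) (HQ : in_D Q) (HC : in_D C).

Lemma psi_rel_triangle_intro v w X : on_S1 v -> on_S1 w -> w <> v ->
  (X = P \/ X = Q \/ X = C) -> cross v w X = 0 ->
  0 <= cross v w P -> 0 <= cross v w Q -> 0 <= cross v w C ->
  psi_rel (filled_triangle P Q C) v w.
Proof.
  intros Hv Hw Hne HX H0 H1 H2 H3. repeat split; auto.
  - exists X. split; auto. pose proof (filled_triangle_vertices P Q C). intuition congruence.
  - intros u Hu. apply (filled_triangle_cross_nonneg P Q C); auto.
Qed.

Lemma psi_rel_support_lift x : psi_rel (filled_triangle P Q C) (circ x) (circ (support_lift P Q C x)).
Proof.
  unfold support_lift. pose proof (support_step_bounds P Q C x).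
  destruct (support_step_spec P Q C x) as [Hmin [H1 [H2 H3]]].
  destruct Hmin as [E | [E | E]];
    [apply psi_rel_triangle_intro with (X := P) | apply psi_rel_triangle_intro with (X := Q)
    | apply psi_rel_triangle_intro with (X := C)];
    auto using circ_S1; try (apply circ_neq; lra); try (rewrite E; apply cross_far_angle_zero; auto);
    apply cross_far_angle_nonneg; auto; lra.
Qed.

Lemma psi_rel_support_lift_unique x w :
  psi_rel (filled_triangle P Q C) (circ x) w -> w = circ (support_lift P Q C x).
Proof.
  intros (_ & Hw & Hne & (u & Hu & Hu0) & Hall).
  destruct (S1_circ_in w x Hw Hne) as [t [-> Ht]].
  pose proof (support_step_bounds P Q C x).
  destruct (support_step_spec P Q C x) as [Hmin [H1 [H2 H3]]].
  destruct (filled_triangle_vertices P Q C) as (TP & TQ & TC).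
  unfold support_lift. set (m := support_step P Q C x) in *.
  replace t with (x + (t - x)) in * by ring.
  destruct (Rtotal_order (t - x) m) as [Hlt | [-> | Hgt]]; [exfalso | reflexivity | exfalso].
  - assert (0 < cross (circ x) (circ (x + (t - x))) u); [|lra].
    apply (filled_triangle_cross_pos P Q C); auto; apply cross_far_angle_pos; auto; lra.
  - destruct Hmin as [E | [E | E]];
      [pose proof (Hall P TP) as Hv; assert (cross (circ x) (circ (x + (t - x))) P < 0)
      | pose proof (Hall Q TQ) as Hv; assert (cross (circ x) (circ (x + (t - x))) Q < 0)
      | pose proof (Hall C TC) as Hv; assert (cross (circ x) (circ (x + (t - x))) C < 0)];
      try lra; apply cross_far_angle_neg; auto; lra.
Qed.

Lemma support_lift_of_psi_rel s t :
  psi_rel (filled_triangle P Q C) (circ s) (circ t) -> 0 < t - s < 1 -> support_lift P Q C s = t.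
Proof.
  intros Hpsi Hts. apply psi_rel_support_lift_unique in Hpsi.
  pose proof (support_step_bounds P Q C s). unfold support_lift in *.
  symmetry. apply circ_inj; auto. lra.
Qed.

Lemma support_lift_continuous : continuity (support_lift P Q C).
Proof.
  assert (Hmin : forall f g, continuity f -> continuity g -> continuity (fun x => Rmin (f x) (g x))).
  { intros f g Hf Hg.
    assert (Hd : continuity (fun x => f x - g x)) by reg.
    assert (continuity (fun x => Rabs (f x - g x)))
      by (apply (continuity_comp (fun x => f x - g x) Rabs); auto; apply Rcontinuity_abs).
    assert (Hform : continuity (fun x => (f x + g x - Rabs (f x - g x)) / 2)) by reg.
    intro x. apply continuity_pt_locally_ext with (a := 1) (f := fun x => (f x + g x - Rabs (f x - g x)) / 2);
      [lra | | apply Hform].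
    intros y _. unfold Rmin. destruct (Rle_dec (f y) (g y));
      [rewrite Rabs_left1 | rewrite Rabs_right]; lra. }
  assert (continuity (support_step P Q C))
    by (apply Hmin; [|apply Hmin]; apply far_angle_continuous; auto).
  unfold support_lift. reg.
Qed.

Lemma lift_psi_eq_support_lift F : is_lift_psi (filled_triangle P Q C) F ->
  forall x, F x = support_lift P Q C x.
Proof.
  intros (Hc & H0 & Hpsi).
  assert (Hint : forall x, exists k : Z, F x - support_lift P Q C x = IZR k)
    by (intro x; apply circ_inj_Z, psi_rel_support_lift_unique, Hpsi).
  assert (Hcd : continuity (fun x => F x - support_lift P Q C x))
    by (pose proof support_lift_continuous; reg).
  intro x. enough (F x - support_lift P Q C x = 0) by lra.
  apply (continuous_integer_valued_zero _ Hcd Hint).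
  destruct (Hint 0) as [k Hk]. rewrite Hk. apply IZR_between_m1_1. rewrite <- Hk.
  unfold support_lift. pose proof (support_step_bounds P Q C 0). lra.
Qed.

Lemma support_lift_is_lift_psi : is_lift_psi (filled_triangle P Q C) (support_lift P Q C).
Proof.
  split; [exact support_lift_continuous|]. split; [|exact psi_rel_support_lift].
  unfold support_lift. pose proof (support_step_bounds P Q C 0). lra.
Qed.

Lemma support_lift_monotone a b : a <= b -> support_lift P Q C a <= support_lift P Q C b.
Proof.
  intro Hab. destruct (Rle_lt_or_eq_dec _ _ Hab) as [Hlt | ->]; [|lra].
  destruct (support_step_spec P Q C a) as [_ [Ha1 [Ha2 Ha3]]].
  destruct (support_step_spec P Q C b) as [[E | [E | E]] _]; unfold support_lift; rewrite E;
    [pose proof (far_lift_increasing P a b HP Hlt) | pose proof (far_lift_increasing Q a b HQ Hlt)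
    | pose proof (far_lift_increasing C a b HC Hlt)]; unfold far_lift in *; lra.
Qed.
End SupportLift.

(** * Rotation number from a periodic orbit *)

Section RotationNumber.
Variable F : R -> R.
Hypothesis F_monotone : forall a b, a <= b -> F a <= F b.
Hypothesis F_shift1 : forall x, F (x + 1) = F x + 1.
Hypothesis F_step : forall x, x <= F x <= x + 1.

Lemma iter_monotone n a b : a <= b -> Nat.iter n F a <= Nat.iter n F b.
Proof. intro Hab. induction n; simpl; auto. Qed.

Lemma iter_shift_nat n x (j : nat) : Nat.iter n F (x + INR j) = Nat.iter n F x + INR j.
Proof.
  assert (Fj : forall y, F (y + INR j) = F y + INR j).
  { intro y. induction j as [|j IHj]; [simpl; now rewrite !Rplus_0_r|].
    rewrite S_INR, <- !Rplus_assoc, F_shift1, IHj. ring. }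
  induction n; simpl; [reflexivity|]. now rewrite IHn, Fj.
Qed.

Lemma iter_bounds n x : x <= Nat.iter n F x <= x + INR n.
Proof.
  induction n as [|n IHn]; [simpl; lra|].
  rewrite Nat.iter_succ, S_INR. pose proof (F_step (Nat.iter n F x)). lra.
Qed.

Lemma iter_displacement_bound x y n :
  Rabs (Nat.iter n F x - x - (Nat.iter n F y - y)) <= 2 * INR (Z.to_nat (up (Rabs (x - y)))).
Proof.
  destruct (archimed (Rabs (x - y))) as [Hj _].
  set (j := Z.to_nat (up (Rabs (x - y)))).
  assert (Hxy : Rabs (x - y) <= INR j).
  { unfold j. rewrite INR_IZR_INZ, Z2Nat.id; [lra|].
    apply le_IZR. pose proof (Rabs_pos (x - y)). lra. }
  assert (- INR j <= x - y <= INR j) by (pose proof (Rle_abs (x - y));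
    pose proof (Rle_abs (- (x - y))); rewrite Rabs_Ropp in *; lra).
  pose proof (iter_monotone n x (y + INR j) ltac:(lra)) as H1.
  pose proof (iter_monotone n (y - INR j) x ltac:(lra)) as H2.
  rewrite iter_shift_nat in H1.
  replace (Nat.iter n F y) with (Nat.iter n F (y - INR j) + INR j) in *
    by (rewrite <- iter_shift_nat; f_equal; ring).
  apply Rabs_le. lra.
Qed.

Variables (p q : nat) (x0 : R).
Hypothesis q_pos : (0 < q)%nat.
Hypothesis periodic : Nat.iter q F x0 = x0 + INR p.

Lemma iter_periodic_bound n : Rabs (Nat.iter n F x0 - x0 - INR p * INR n / INR q) <= INR p + INR q.
Proof.
  assert (Hq : 0 < INR q) by (apply lt_0_INR; exact q_pos).
  assert (Hmult : forall m, Nat.iter (q * m) F x0 = x0 + INR (p * m)).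
  { induction m as [|m IHm]; [rewrite !Nat.mul_0_r; simpl; ring|].
    replace (q * S m)%nat with (q + q * m)%nat by lia.
    rewrite Nat.iter_add, IHm, iter_shift_nat, periodic, !mult_INR, S_INR. ring. }
  rewrite (Nat.div_mod n q) by lia. set (m := (n / q)%nat). set (r := (n mod q)%nat).
  assert (Hr : (r < q)%nat) by (apply Nat.mod_upper_bound; lia).
  apply lt_INR in Hr.
  rewrite Nat.add_comm, Nat.iter_add, Hmult, iter_shift_nat, plus_INR, !mult_INR.
  pose proof (iter_bounds r x0). pose proof (pos_INR r). pose proof (pos_INR p).
  assert (0 <= INR p * INR r / INR q <= INR p).
  { split; [apply Rmult_le_pos; [nra | left; apply Rinv_0_lt_compat; lra]|].
    apply (Rmult_le_reg_r (INR q)); [lra|]. field_simplify; nra. }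
  replace (INR p * (INR r + INR q * INR m) / INR q) with (INR p * INR m + INR p * INR r / INR q)
    by (field; lra).
  apply Rabs_le. lra.
Qed.

Lemma rotation_number_periodic x : Un_cv (fun n => (Nat.iter n F x - x) / INR n) (INR p / INR q).
Proof.
  assert (Hq : 0 < INR q) by (apply lt_0_INR; exact q_pos).
  set (B := 2 * INR (Z.to_nat (up (Rabs (x - x0)))) + (INR p + INR q)).
  assert (Hbound : forall n, Rabs (Nat.iter n F x - x - INR p * INR n / INR q) <= B).
  { intro n. pose proof (iter_displacement_bound x x0 n). pose proof (iter_periodic_bound n).
    replace (Nat.iter n F x - x - INR p * INR n / INR q)
      with ((Nat.iter n F x - x - (Nat.iter n F x0 - x0)) + (Nat.iter n F x0 - x0 - INR p * INR n / INR q))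
      by ring.
    eapply Rle_trans; [apply Rabs_triang|]. unfold B. lra. }
  intros eps Heps.
  assert (HB : 0 <= B) by (pose proof (Rle_trans _ _ _ (Rabs_pos _) (Hbound 0%nat)); lra).
  destruct (archimed (B / eps)) as [HN _].
  exists (S (Z.to_nat (up (B / eps)))). intros n Hn.
  assert (HnB : B / eps < INR n).
  { apply le_INR in Hn. rewrite S_INR, INR_IZR_INZ, Z2Nat.id in Hn; [lra|].
    apply le_IZR. assert (0 <= B / eps) by (apply Rmult_le_pos; [lra | left; apply Rinv_0_lt_compat; lra]).
    lra. }
  assert (Hn0 : 0 < INR n) by (apply lt_0_INR; lia).
  unfold R_dist.
  replace ((Nat.iter n F x - x) / INR n - INR p / INR q)
    with ((Nat.iter n F x - x - INR p * INR n / INR q) / INR n) by (field; lra).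
  unfold Rdiv at 1. rewrite Rabs_mult, Rabs_inv, (Rabs_right (INR n)) by lra.
  apply (Rmult_lt_reg_r (INR n)); [lra|]. unfold Rdiv. rewrite Rmult_assoc, Rinv_l, Rmult_1_r by lra.
  apply (Rle_lt_trans _ B); [apply Hbound|].
  apply (Rmult_lt_reg_r (/ eps)); [apply Rinv_0_lt_compat; lra|].
  replace (eps * INR n * / eps) with (INR n) by (field; lra). exact HnB.
Qed.
End RotationNumber.

(** * The Klein distance *)

Lemma chord_t_vieta X Y : in_D X -> X <> Y ->
  let a := sq_norm (psub Y X) in let b := 2 * dot X (psub Y X) in let c := sq_norm X - 1 in
  let t1 := chord_t X Y (-1) in let t2 := chord_t X Y 1 in
  t1 < t2 /\ t1 + t2 = - b / a /\ t1 * t2 = c / a.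
Proof.
  intros HX Hne a b c t1 t2.
  pose proof (sq_norm_pos_neq X Y Hne) as Ha. fold a in Ha.
  assert (Hc : c < 0) by (unfold c, in_D in *; lra).
  set (sD := sqrt (b * b - 4 * a * c)).
  assert (HsD : sD * sD = b * b - 4 * a * c) by (apply sqrt_sqrt; nra).
  assert (HsD0 : 0 < sD) by (apply sqrt_lt_R0; nra).
  assert (Et1 : t1 = (- b + -1 * sD) / (2 * a)) by reflexivity.
  assert (Et2 : t2 = (- b + 1 * sD) / (2 * a)) by reflexivity.
  split; [|split].
  - rewrite Et1, Et2. apply Rmult_lt_compat_r; [apply Rinv_0_lt_compat|]; lra.
  - rewrite Et1, Et2. field. lra.
  - rewrite Et1, Et2. transitivity ((b * b - sD * sD) / (4 * a * a)); [field; lra|].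
    rewrite HsD. field. lra.
Qed.

Lemma chord_t_spec X Y : in_D X -> in_D Y -> X <> Y ->
  let a := sq_norm (psub Y X) in
  let t1 := chord_t X Y (-1) in let t2 := chord_t X Y 1 in
  t1 < 0 /\ 1 < t2 /\
  on_S1 (chord_end1 X Y) /\ on_S1 (chord_end2 X Y) /\
  t1 * t2 = (sq_norm X - 1) / a /\
  (1 - t1) * (1 - t2) = (sq_norm Y - 1) / a /\
  (t2 - t1) * (t2 - t1) = 4 * ((1 - dot X Y) ^ 2 - (1 - sq_norm X) * (1 - sq_norm Y)) / (a * a).
Proof.
  intros HX HY Hne a t1 t2.
  destruct (chord_t_vieta X Y HX Hne) as (Hlt & Hsum & Hprod). fold a t1 t2 in Hlt, Hsum, Hprod.
  pose proof (sq_norm_pos_neq X Y Hne) as Ha. fold a in Ha. unfold in_D in HX, HY.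
  assert (Habc : a + 2 * dot X (psub Y X) + (sq_norm X - 1) = sq_norm Y - 1)
    by (unfold a; destruct X, Y; unfold sq_norm, dot, psub; simpl; ring).
  assert (Hsum1 : (1 - t1) * (1 - t2) = (sq_norm Y - 1) / a)
    by (transitivity (1 - (t1 + t2) + t1 * t2); [ring | rewrite Hsum, Hprod, <- Habc; field; lra]).
  assert (Hneg : t1 * t2 < 0) by (rewrite Hprod; apply Rdiv_neg_pos; lra).
  assert (Hneg1 : (1 - t1) * (1 - t2) < 0) by (rewrite Hsum1; apply Rdiv_neg_pos; lra).
  (* [|X + t (Y - X)|^2 - 1 = a (t - t1) (t - t2)] *)
  assert (Hroot : forall t, t = t1 \/ t = t2 -> on_S1 (padd X (pscale t (psub Y X)))).
  { intros t Ht. unfold on_S1.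
    transitivity (1 + a * (t * t - (t1 + t2) * t + t1 * t2)).
    - rewrite Hsum, Hprod. unfold a in *. destruct X, Y.
      unfold sq_norm, dot, psub, padd, pscale in *; simpl in *. field. lra.
    - destruct Ht as [-> | ->]; ring. }
  split; [nra|]. split; [nra|]. split; [apply Hroot; now left|]. split; [apply Hroot; now right|].
  split; [exact Hprod|]. split; [exact Hsum1|].
  transitivity ((t1 + t2) * (t1 + t2) - 4 * (t1 * t2)); [ring|]. rewrite Hsum, Hprod.
  unfold a. destruct X as [x1 x2], Y as [y1 y2]. unfold sq_norm, dot, psub in *; simpl in *.
  field. lra.
Qed.

Lemma edist_on_line X D t s :
  edist (padd X (pscale t D)) (padd X (pscale s D)) = Rabs (t - s) * sqrt (sq_norm D).
Proof.
  unfold edist. rewrite <- sqrt_Rsqr_abs, <- sqrt_mult_alt by apply Rle_0_sqr.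
  f_equal. destruct X, D. unfold Rsqr, sq_norm, psub, padd, pscale; simpl. ring.
Qed.

Lemma exp_2dprime X Y : in_D X -> in_D Y -> X <> Y ->
  let t1 := chord_t X Y (-1) in let t2 := chord_t X Y 1 in
  exp (2 * dprime X Y) = (1 - t1) * t2 / (- t1 * (t2 - 1)).
Proof.
  intros HX HY Hne t1 t2.
  destruct (chord_t_spec X Y HX HY Hne) as (Ht1 & Ht2 & _). fold t1 t2 in Ht1, Ht2.
  pose proof (sq_norm_pos_neq X Y Hne) as Ha.
  unfold dprime. destruct (Rle_dec (sq_norm (psub Y X)) 0) as [Hle | _]; [lra|].
  assert (EY : Y = padd X (pscale 1 (psub Y X)))
    by (destruct X, Y; unfold padd, pscale, psub; simpl; f_equal; ring).
  assert (EX : X = padd X (pscale 0 (psub Y X)))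
    by (destruct X, Y; unfold padd, pscale, psub; simpl; f_equal; ring).
  unfold chord_end1, chord_end2. fold t1 t2.
  pose proof (edist_on_line X (psub Y X) t1 1) as e1. rewrite <- EY in e1.
  pose proof (edist_on_line X (psub Y X) t2 0) as e2. rewrite <- EX in e2.
  pose proof (edist_on_line X (psub Y X) t1 0) as e3. rewrite <- EX in e3.
  pose proof (edist_on_line X (psub Y X) t2 1) as e4. rewrite <- EY in e4.
  rewrite e1, e2, e3, e4.
  set (sa := sqrt (sq_norm (psub Y X))). assert (Hsa : 0 < sa) by (apply sqrt_lt_R0; lra).
  rewrite (Rabs_left (t1 - 1)), (Rabs_right (t2 - 0)), (Rabs_left (t1 - 0)), (Rabs_right (t2 - 1))
    by lra.
  set (rho := (1 - t1) * t2 / (- t1 * (t2 - 1))).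
  replace (- (t1 - 1) * sa * ((t2 - 0) * sa) / (- (t1 - 0) * sa * ((t2 - 1) * sa))) with rho
    by (unfold rho; field; repeat split; lra).
  assert (Hrho : 1 < rho).
  { unfold rho. apply (Rmult_lt_reg_r (- t1 * (t2 - 1))); [nra|]. field_simplify; nra. }
  rewrite Rabs_right by (left; rewrite <- ln_1; apply ln_increasing; lra).
  replace (2 * (/ 2 * ln rho)) with (ln rho) by field. apply exp_ln. lra.
Qed.

(* At [r = exp (2 d)] this is [4 sinh d ^ 2]; it turns cross-ratio identities into polynomial ones. *)
Definition sinh_gap (r : R) : R := (r - 1) * (r - 1) / r.

Lemma sinh_gap_increasing r1 r2 : 1 <= r1 -> r1 < r2 -> sinh_gap r1 < sinh_gap r2.
Proof.
  intros H1 H2. unfold sinh_gap.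
  replace ((r1 - 1) * (r1 - 1) / r1) with ((r2 - 1) * (r2 - 1) / r2 - (r2 - r1) * (1 - / (r1 * r2)))
    by (field; lra).
  assert (/ (r1 * r2) < 1) by (rewrite <- Rinv_1; apply Rinv_lt_contravar; nra).
  assert (0 < (r2 - r1) * (1 - / (r1 * r2))) by (apply Rmult_lt_0_compat; lra).
  lra.
Qed.

Lemma sinh_gap_monotone r1 r2 : 1 <= r1 -> r1 <= r2 -> sinh_gap r1 <= sinh_gap r2.
Proof.
  intros H1 H2. destruct (Rle_lt_or_eq_dec _ _ H2) as [Hlt | ->]; [|lra].
  left. apply sinh_gap_increasing; auto.
Qed.

Lemma sinh_gap_injective r1 r2 : 1 <= r1 -> 1 <= r2 -> sinh_gap r1 = sinh_gap r2 -> r1 = r2.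
Proof.
  intros H1 H2 E. destruct (Rtotal_order r1 r2) as [H | [H | H]]; auto;
    [pose proof (sinh_gap_increasing r1 r2 H1 H) | pose proof (sinh_gap_increasing r2 r1 H2 H)]; lra.
Qed.



Lemma dprime_self X : dprime X X = 0.
Proof.
  unfold dprime. destruct (Rle_dec _ _) as [_ | Hn]; [reflexivity|].
  exfalso. apply Hn. unfold sq_norm, psub. simpl. lra.
Qed.

Lemma dprime_nonneg X Y : 0 <= dprime X Y.
Proof.
  unfold dprime. destruct (Rle_dec _ _); [lra|].
  apply Rmult_le_pos; [lra | apply Rabs_pos].
Qed.

Lemma exp_monotone a b : a <= b -> exp a <= exp b.
Proof. intro H. destruct (Rle_lt_or_eq_dec _ _ H) as [Hlt | ->]; [left; now apply exp_increasing | lra]. Qed.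

Lemma exp_2dprime_ge1 X Y : 1 <= exp (2 * dprime X Y).
Proof. rewrite <- exp_0. apply exp_monotone. pose proof (dprime_nonneg X Y). lra. Qed.

Lemma sinh_gap_dprime X Y : in_D X -> in_D Y ->
  sinh_gap (exp (2 * dprime X Y))
  = 4 * ((1 - dot X Y) ^ 2 - (1 - sq_norm X) * (1 - sq_norm Y)) / ((1 - sq_norm X) * (1 - sq_norm Y)).
Proof.
  intros HX HY. unfold in_D in *.
  destruct (pt_eq_or_neq X Y) as [<- | Hne].
  - rewrite dprime_self, Rmult_0_r, exp_0. change (dot X X) with (sq_norm X).
    unfold sinh_gap. field. lra.
  - rewrite exp_2dprime by auto.
    destruct (chord_t_spec X Y HX HY Hne) as (H1 & H2 & _ & _ & Ep & Eq & Ed).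
    pose proof (sq_norm_pos_neq X Y Hne). unfold sinh_gap.
    set (t1 := chord_t X Y (-1)) in *. set (t2 := chord_t X Y 1) in *.
    transitivity ((t2 - t1) * (t2 - t1) / ((t1 * t2) * ((1 - t1) * (1 - t2)))).
    + field. repeat split; nra.
    + rewrite Ed, Ep, Eq. field. repeat split; lra.
Qed.

Lemma dprime_sym X Y : in_D X -> in_D Y -> dprime X Y = dprime Y X.
Proof.
  intros HX HY.
  enough (E : exp (2 * dprime X Y) = exp (2 * dprime Y X)) by (apply exp_inv in E; lra).
  apply sinh_gap_injective; try apply exp_2dprime_ge1.
  rewrite !sinh_gap_dprime by auto. replace (dot Y X) with (dot X Y) by (unfold dot; ring).
  field. unfold in_D in *. lra.
Qed.

Lemma exp_2dprime_gt1 X Y : in_D X -> in_D Y -> X <> Y -> 1 < exp (2 * dprime X Y).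
Proof.
  intros HX HY Hne. rewrite exp_2dprime by auto.
  destruct (chord_t_spec X Y HX HY Hne) as (H1 & H2 & _).
  apply (Rmult_lt_reg_r (- chord_t X Y (-1) * (chord_t X Y 1 - 1))); [nra|]. field_simplify; nra.
Qed.

Lemma sinh_gap_exp_Deltaprime1 X Y : in_D X -> in_D Y -> X <> Y ->
  sinh_gap (exp (Deltaprime 1 X Y)) = 4 / (exp (2 * dprime X Y) - 1).
Proof.
  intros HX HY Hne. pose proof (exp_2dprime_gt1 X Y HX HY Hne) as Hr.
  set (e := exp (dprime X Y)).
  assert (He2 : exp (2 * dprime X Y) = e * e) by (unfold e; rewrite <- exp_plus; f_equal; ring).
  rewrite He2 in *. assert (He : 1 < e) by (pose proof (exp_pos (dprime X Y)); fold e in H; nra).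
  unfold Deltaprime. replace (INR 1 * dprime X Y) with (dprime X Y) by (simpl; ring). fold e.
  rewrite exp_ln by (apply Rdiv_lt_0_compat; lra).
  unfold sinh_gap. field. repeat split; nra.
Qed.

(** * The condition [delta = Delta'_1 / 2] *)

Lemma collinear_affine P Q S : P <> Q -> cross P Q S = 0 ->
  S = padd P (pscale (dot (psub S P) (psub Q P) / sq_norm (psub Q P)) (psub Q P)).
Proof.
  intros Hne Hc. pose proof (sq_norm_pos_neq P Q Hne) as Ha.
  destruct P as [p1 p2], Q as [q1 q2], S as [s1 s2].
  unfold cross, sq_norm, dot, psub, padd, pscale in *; simpl in *.
  set (N := (q1 - p1) * (q1 - p1) + (q2 - p2) * (q2 - p2)) in *.
  set (X := (s1 - p1) * (q1 - p1) + (s2 - p2) * (q2 - p2)).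
  assert (E1 : X * (q1 - p1) = (s1 - p1) * N).
  { transitivity ((s1 - p1) * N + (q2 - p2) * ((q1 - p1) * (s2 - p2) - (q2 - p2) * (s1 - p1)));
      [unfold X, N; ring | rewrite Hc; ring]. }
  assert (E2 : X * (q2 - p2) = (s2 - p2) * N).
  { transitivity ((s2 - p2) * N - (q1 - p1) * ((q1 - p1) * (s2 - p2) - (q2 - p2) * (s1 - p1)));
      [unfold X, N; ring | rewrite Hc; ring]. }
  f_equal; [replace (X / N * (q1 - p1)) with (X * (q1 - p1) / N) by (field; lra); rewrite E1
           | replace (X / N * (q2 - p2)) with (X * (q2 - p2) / N) by (field; lra); rewrite E2];
    field; lra.
Qed.

Lemma sq_norm_chord A B s : on_S1 A -> on_S1 B ->
  sq_norm (padd A (pscale s (psub B A))) = 1 - s * (1 - s) * sq_norm (psub B A).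
Proof.
  destruct A as [a1 a2], B as [b1 b2]. unfold on_S1, sq_norm, padd, pscale, psub; simpl.
  intros HA HB.
  transitivity ((1 - s) ^ 2 * (a1 * a1 + a2 * a2) + 2 * s * (1 - s) * (a1 * b1 + a2 * b2)
                + s ^ 2 * (b1 * b1 + b2 * b2)); [ring|].
  transitivity (1 - s * (1 - s) * ((a1 * a1 + a2 * a2) + (b1 * b1 + b2 * b2) - 2 * (a1 * b1 + a2 * b2)));
    [rewrite HA, HB; ring | ring].
Qed.

Lemma in_D_chord A B s : on_S1 A -> on_S1 B -> A <> B -> 0 < s < 1 ->
  in_D (padd A (pscale s (psub B A))).
Proof.
  intros HA HB HAB Hs. unfold in_D. rewrite sq_norm_chord by auto.
  pose proof (sq_norm_pos_neq A B HAB). assert (0 < s * (1 - s)) by nra. nra.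
Qed.

Lemma chord_normal_form P Q : in_D P -> in_D Q -> P <> Q ->
  exists A B p q, on_S1 A /\ on_S1 B /\ A <> B /\ 0 < p < q /\ q < 1 /\
    P = padd A (pscale p (psub B A)) /\ Q = padd A (pscale q (psub B A)) /\
    exp (2 * dprime P Q) = q * (1 - p) / (p * (1 - q)).
Proof.
  intros HP HQ HPQ. pose proof (exp_2dprime P Q HP HQ HPQ) as Ed.
  destruct (chord_t_spec P Q HP HQ HPQ) as (Ht1 & Ht2 & HA & HB & _).
  pose proof (sq_norm_pos_neq P Q HPQ).
  set (t1 := chord_t P Q (-1)) in *. set (t2 := chord_t P Q 1) in *.
  set (A := chord_end1 P Q) in *. set (B := chord_end2 P Q) in *.
  assert (EA : A = padd P (pscale t1 (psub Q P))) by reflexivity.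
  assert (EB : B = padd P (pscale t2 (psub Q P))) by reflexivity.
  exists A, B, (- t1 / (t2 - t1)), ((1 - t1) / (t2 - t1)).
  repeat split; auto.
  - intro E.
    assert (HL : sq_norm (psub B A) = (t2 - t1) * (t2 - t1) * sq_norm (psub Q P))
      by (rewrite EA, EB; destruct P, Q; unfold sq_norm, padd, pscale, psub; simpl; ring).
    rewrite E in HL. replace (sq_norm (psub B B)) with 0 in HL by (unfold sq_norm, psub; simpl; ring).
    assert (0 < (t2 - t1) * (t2 - t1)) by nra. nra.
  - apply Rdiv_lt_0_compat; lra.
  - apply Rmult_lt_compat_r; [apply Rinv_0_lt_compat|]; lra.
  - apply (Rmult_lt_reg_r (t2 - t1)); [lra|]. field_simplify; lra.
  - rewrite EA, EB. destruct P, Q. unfold padd, pscale, psub; simpl. f_equal; field; lra.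
  - rewrite EA, EB. destruct P, Q. unfold padd, pscale, psub; simpl. f_equal; field; lra.
  - rewrite Ed. field. repeat split; lra.
Qed.

Lemma on_chord_affine A B p q S : on_S1 A -> on_S1 B -> A <> B -> p <> q ->
  on_chord (padd A (pscale p (psub B A))) (padd A (pscale q (psub B A))) S <->
  exists s, 0 < s < 1 /\ S = padd A (pscale s (psub B A)).
Proof.
  intros HA HB HAB Hpq.
  split.
  - intros [HS Hc]. rewrite cross_chord_points in Hc.
    assert (HcAB : cross A B S = 0) by (apply Rmult_integral in Hc; destruct Hc; lra).
    set (s := dot (psub S A) (psub B A) / sq_norm (psub B A)).
    pose proof (collinear_affine A B S HAB HcAB) as ES. fold s in ES.
    exists s. split; [|exact ES].
    unfold in_D in HS. rewrite ES, sq_norm_chord in HS by auto.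
    pose proof (sq_norm_pos_neq A B HAB). assert (0 < s * (1 - s)) by nra. split; nra.
  - intros (s & Hs & ->). split; [apply in_D_chord; auto|].
    rewrite cross_chord_points, cross_affine, cross_base, cross_same. ring.
Qed.

Lemma sinh_gap_dprime_chord A B C s : on_S1 A -> on_S1 B -> A <> B -> in_D C -> 0 < s < 1 ->
  sinh_gap (exp (2 * dprime C (padd A (pscale s (psub B A)))))
  = 4 * ((1 - s) * (1 - dot C A) + s * (1 - dot C B)) ^ 2
      / ((1 - sq_norm C) * (s * (1 - s) * sq_norm (psub B A))) - 4.
Proof.
  intros HA HB HAB HC Hs.
  pose proof (sq_norm_pos_neq A B HAB). assert (0 < s * (1 - s)) by nra. unfold in_D in HC.
  rewrite sinh_gap_dprime by auto using in_D_chord. rewrite sq_norm_chord by auto.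
  replace (1 - dot C (padd A (pscale s (psub B A)))) with ((1 - s) * (1 - dot C A) + s * (1 - dot C B))
    by (destruct A, B, C; unfold dot, padd, pscale, psub; simpl; ring).
  field. split; nra.
Qed.

(* AM-GM in the form [4 s (1 - s) a b <= ((1 - s) a + s b)^2], with equality at [s = a / (a + b)]. *)
Lemma sinh_gap_dprime_chord_min A B C : on_S1 A -> on_S1 B -> A <> B -> in_D C ->
  let g s := sinh_gap (exp (2 * dprime C (padd A (pscale s (psub B A))))) in
  let a := 1 - dot C A in let b := 1 - dot C B in
  let gmin := 16 * a * b / ((1 - sq_norm C) * sq_norm (psub B A)) - 4 in
  0 < a / (a + b) < 1 /\ g (a / (a + b)) = gmin /\ forall s, 0 < s < 1 -> gmin <= g s.
Proof.
  intros HA HB HAB HC g a b gmin.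
  pose proof (sq_norm_pos_neq A B HAB).
  assert (Ha : 0 < a) by (pose proof (dot_S1_D_lt1 A C HA HC); unfold a, dot in *; lra).
  assert (Hb : 0 < b) by (pose proof (dot_S1_D_lt1 B C HB HC); unfold b, dot in *; lra).
  assert (HnC : 0 < 1 - sq_norm C) by (unfold in_D in HC; lra).
  assert (Hst : 0 < a / (a + b) < 1).
  { split; [apply Rdiv_lt_0_compat; lra|].
    apply (Rmult_lt_reg_r (a + b)); [lra|]. field_simplify; lra. }
  split; [exact Hst|]. split.
  - unfold g. rewrite sinh_gap_dprime_chord by auto. fold a b. unfold gmin. field. repeat split; lra.
  - intros s Hs. unfold g. rewrite sinh_gap_dprime_chord by auto. fold a b. unfold gmin.
    assert (0 < s * (1 - s)) by nra.
    assert (Hamgm : 4 * s * (1 - s) * a * b <= ((1 - s) * a + s * b) ^ 2)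
      by (pose proof (pow2_ge_0 ((1 - s) * a - s * b)); nra).
    apply Rplus_le_compat_r.
    replace (16 * a * b / ((1 - sq_norm C) * sq_norm (psub B A)))
      with (4 * (4 * s * (1 - s) * a * b) / ((1 - sq_norm C) * (s * (1 - s) * sq_norm (psub B A))))
      by (field; repeat split; lra).
    unfold Rdiv. apply Rmult_le_compat_r; [|lra].
    left. apply Rinv_0_lt_compat. repeat apply Rmult_lt_0_compat; lra.
Qed.

Lemma delta_half_Deltaprime1_normal_form P Q C : in_D P -> in_D Q -> in_D C -> P <> Q ->
  delta_is P Q C (/ 2 * Deltaprime 1 P Q) ->
  exists A B p q, on_S1 A /\ on_S1 B /\ A <> B /\ 0 < p < q /\ q < 1 /\
    P = padd A (pscale p (psub B A)) /\ Q = padd A (pscale q (psub B A)) /\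
    4 * (1 - dot C A) * (1 - dot C B) * (q - p) = q * (1 - p) * (1 - sq_norm C) * sq_norm (psub B A).
Proof.
  intros HP HQ HC HPQ [[S0 [HS0 Hm0]] Hmin].
  pose proof (sinh_gap_exp_Deltaprime1 P Q HP HQ HPQ) as Hgap.
  set (m := / 2 * Deltaprime 1 P Q) in *.
  replace (Deltaprime 1 P Q) with (2 * m) in Hgap by (unfold m; field).
  destruct (chord_normal_form P Q HP HQ HPQ)
    as (A & B & p & q & HA & HB & HAB & [Hp Hpq] & Hq & EP & EQ & Ed).
  exists A, B, p, q. do 7 (split; auto).
  rewrite Ed in Hgap. rewrite EP, EQ in HS0, Hmin. rewrite on_chord_affine in HS0 by (auto; lra).
  destruct (sinh_gap_dprime_chord_min A B C HA HB HAB HC) as (Hst & Hgst & Hlow).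
  set (a := 1 - dot C A) in *. set (b := 1 - dot C B) in *.
  set (gmin := 16 * a * b / ((1 - sq_norm C) * sq_norm (psub B A)) - 4) in *.
  assert (Hm : sinh_gap (exp (2 * m)) = gmin).
  { apply Rle_antisym.
    - rewrite <- Hgst. apply sinh_gap_monotone.
      + rewrite <- Hm0. apply exp_2dprime_ge1.
      + apply exp_monotone, Rmult_le_compat_l; [lra|]. apply Hmin.
        apply on_chord_affine; auto; [lra|]. exists (a / (a + b)). auto.
    - destruct HS0 as (s & Hs & ->). rewrite <- Hm0. apply Hlow, Hs. }
  pose proof (sq_norm_pos_neq A B HAB).
  assert (HnC : 0 < 1 - sq_norm C) by (unfold in_D in HC; lra).
  assert (E : 16 * a * b / ((1 - sq_norm C) * sq_norm (psub B A)) = 4 * q * (1 - p) / (q - p)).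
  { transitivity (4 / (q * (1 - p) / (p * (1 - q)) - 1) + 4); [unfold gmin in Hm; lra|].
    field. repeat split; nra. }
  apply (Rmult_eq_reg_r (4 / ((1 - sq_norm C) * sq_norm (psub B A) * (q - p)))).
  - transitivity (16 * a * b / ((1 - sq_norm C) * sq_norm (psub B A))); [field; repeat split; lra|].
    rewrite E. field. repeat split; lra.
  - apply Rgt_not_eq, Rdiv_lt_0_compat; [lra|]. repeat apply Rmult_lt_0_compat; lra.
Qed.

(** * The closing identity *)

(* [sq_norm (psub M v) * cross X (far_end M v) Q], with the denominator of [far_end] cleared. *)
Definition cross_far_end_num (X v M Q : pt) : R :=
  cross X v Q * sq_norm (psub M v) + 2 * (1 - dot v M) * (cross X M Q - cross X v Q).

Lemma cross_far_end_num_spec X v M Q : on_S1 v -> in_D M ->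
  cross X (far_end M v) Q * sq_norm (psub M v) = cross_far_end_num X v M Q.
Proof.
  intros Hv HM. pose proof (S1_D_sq_norm_pos v M Hv HM).
  unfold far_end, cross_far_end_num. rewrite cross_affine_mid. field. lra.
Qed.

(* With [A = (1, 0)] and [B] in rational parametrisation the identity is a [field] computation:
   solve the hypothesis for [p] and substitute. *)
Lemma closing_identity_normalized (v c1 c2 p q : R) :
  c1 * c1 + c2 * c2 < 1 -> 0 < q < 1 ->
  let A := (1, 0) in let B := ((v * v - 1) / (v * v + 1), 2 * v / (v * v + 1)) in let C := (c1, c2) in
  4 * (1 - dot C A) * (1 - dot C B) * (q - p) = q * (1 - p) * (1 - sq_norm C) * sq_norm (psub B A) ->
  cross_far_end_num (far_end C A) (far_end C B) (padd A (pscale p (psub B A)))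
    (padd A (pscale q (psub B A))) = 0.
Proof.
  intros HC Hq A B C Hcond.
  set (nC := 1 - (c1 * c1 + c2 * c2)). set (bt := v * v + 1 - c1 * (v * v - 1) - 2 * c2 * v).
  assert (Hv : 0 < v * v + 1) by nra.
  assert (HnC : 0 < nC) by (unfold nC; lra).
  assert (Hc' : (1 - c1) * bt * (q - p) = q * (1 - p) * nC).
  { assert (E : 4 * (1 - dot C A) * (1 - dot C B) * (q - p) = 4 * ((1 - c1) * bt * (q - p)) / (v * v + 1))
      by (unfold A, B, C, dot, bt; simpl; field; lra).
    assert (E' : q * (1 - p) * (1 - sq_norm C) * sq_norm (psub B A) = 4 * (q * (1 - p) * nC) / (v * v + 1))
      by (unfold A, B, C, sq_norm, psub, nC; simpl; field; lra).
    rewrite E, E' in Hcond. apply (Rmult_eq_reg_r (4 / (v * v + 1))); [|apply Rgt_not_eq, Rdiv_lt_0_compat; lra].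
    unfold Rdiv in *. lra. }
  set (Dd := q * nC - (1 - c1) * bt).
  assert (HDd : Dd <> 0).
  { intro E. assert (Hp : p * Dd = q * (nC - (1 - c1) * bt)) by (unfold Dd; nra).
    rewrite E, Rmult_0_r in Hp. symmetry in Hp. apply Rmult_integral in Hp.
    assert (0 < (1 - q) * nC) by (apply Rmult_lt_0_compat; lra).
    unfold Dd in E. destruct Hp; nra. }
  assert (Hp : p = q * (nC - (1 - c1) * bt) / Dd).
  { apply (Rmult_eq_reg_r Dd); auto. unfold Rdiv. rewrite Rmult_assoc, Rinv_l by auto. unfold Dd. nra. }
  rewrite Hp. unfold Dd, nC, bt in *. unfold A, B, C.
  unfold cross_far_end_num, far_end, padd, pscale, psub, dot, sq_norm, cross; simpl.
  field. split; [nra|]. split; [lra|]. split; [|exact HDd].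
  intro E.
  destruct (Rplus_sqr_eq_0 (c1 * (v * v + 1) - (v * v - 1)) (c2 * (v * v + 1) - 2 * v) E) as [E1 E2].
  assert ((c1 * c1 + c2 * c2) * ((v * v + 1) * (v * v + 1)) = (v * v + 1) * (v * v + 1)).
  { transitivity ((c1 * (v * v + 1)) ^ 2 + (c2 * (v * v + 1)) ^ 2); [ring|].
    replace (c1 * (v * v + 1)) with (v * v - 1) by lra. replace (c2 * (v * v + 1)) with (2 * v) by lra.
    ring. }
  nra.
Qed.

Definition rot_to_e1 (a w : pt) : pt :=
  (fst a * fst w + snd a * snd w, - snd a * fst w + fst a * snd w).

Section RotToE1.
Variable a : pt.
Hypothesis Ha : on_S1 a.

Let Ha' : fst a * fst a + snd a * snd a = 1.
Proof. exact Ha. Qed.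

Lemma rot_to_e1_dot u w : dot (rot_to_e1 a u) (rot_to_e1 a w) = dot u w.
Proof.
  unfold rot_to_e1, dot; simpl.
  transitivity ((fst a * fst a + snd a * snd a) * (fst u * fst w + snd u * snd w)); [ring|].
  rewrite Ha'. ring.
Qed.

Lemma rot_to_e1_sq_norm u : sq_norm (rot_to_e1 a u) = sq_norm u.
Proof. apply rot_to_e1_dot. Qed.

Lemma rot_to_e1_psub u w : rot_to_e1 a (psub u w) = psub (rot_to_e1 a u) (rot_to_e1 a w).
Proof. unfold rot_to_e1, psub; simpl; f_equal; ring. Qed.

Lemma rot_to_e1_padd u w : rot_to_e1 a (padd u w) = padd (rot_to_e1 a u) (rot_to_e1 a w).
Proof. unfold rot_to_e1, padd; simpl; f_equal; ring. Qed.

Lemma rot_to_e1_pscale k u : rot_to_e1 a (pscale k u) = pscale k (rot_to_e1 a u).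
Proof. unfold rot_to_e1, pscale; simpl; f_equal; ring. Qed.

Lemma rot_to_e1_cross o u w : cross (rot_to_e1 a o) (rot_to_e1 a u) (rot_to_e1 a w) = cross o u w.
Proof.
  unfold rot_to_e1, cross; simpl.
  transitivity ((fst a * fst a + snd a * snd a)
                * ((fst u - fst o) * (snd w - snd o) - (snd u - snd o) * (fst w - fst o))); [ring|].
  rewrite Ha'. ring.
Qed.

Lemma rot_to_e1_far_end M v : rot_to_e1 a (far_end M v) = far_end (rot_to_e1 a M) (rot_to_e1 a v).
Proof.
  unfold far_end. rewrite rot_to_e1_padd, rot_to_e1_pscale, rot_to_e1_psub, rot_to_e1_dot,
    <- rot_to_e1_psub, rot_to_e1_sq_norm.
  reflexivity.
Qed.

Lemma rot_to_e1_cross_far_end_num X v M Q :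
  cross_far_end_num (rot_to_e1 a X) (rot_to_e1 a v) (rot_to_e1 a M) (rot_to_e1 a Q)
  = cross_far_end_num X v M Q.
Proof.
  unfold cross_far_end_num. rewrite !rot_to_e1_cross, rot_to_e1_dot, <- rot_to_e1_psub, rot_to_e1_sq_norm.
  reflexivity.
Qed.

Lemma rot_to_e1_self : rot_to_e1 a a = (1, 0).
Proof. unfold rot_to_e1; simpl. f_equal; [exact Ha' | ring]. Qed.

Lemma rot_to_e1_inj u w : rot_to_e1 a u = rot_to_e1 a w -> u = w.
Proof.
  intro E. destruct u as [u1 u2], w as [w1 w2]. unfold rot_to_e1 in E; simpl in *. injection E as E1 E2.
  set (a1 := fst a) in *. set (a2 := snd a) in *.
  assert (Hinv : forall x1 x2, (x1, x2) = (a1 * (a1 * x1 + a2 * x2) - a2 * (- a2 * x1 + a1 * x2),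
                                           a2 * (a1 * x1 + a2 * x2) + a1 * (- a2 * x1 + a1 * x2))).
  { intros x1 x2. f_equal.
    - transitivity ((a1 * a1 + a2 * a2) * x1); [rewrite Ha'; ring | ring].
    - transitivity ((a1 * a1 + a2 * a2) * x2); [rewrite Ha'; ring | ring]. }
  rewrite (Hinv u1 u2), (Hinv w1 w2), E1, E2. reflexivity.
Qed.
End RotToE1.

Lemma closing_identity A B C p q : on_S1 A -> on_S1 B -> A <> B -> in_D C -> 0 < q < 1 ->
  4 * (1 - dot C A) * (1 - dot C B) * (q - p) = q * (1 - p) * (1 - sq_norm C) * sq_norm (psub B A) ->
  cross_far_end_num (far_end C A) (far_end C B) (padd A (pscale p (psub B A)))
    (padd A (pscale q (psub B A))) = 0.
Proof.
  intros HA HB HAB HC Hq Hcond.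
  rewrite <- (rot_to_e1_cross_far_end_num A HA), !rot_to_e1_far_end, !rot_to_e1_padd, !rot_to_e1_pscale,
    !rot_to_e1_psub, rot_to_e1_self by auto.
  rewrite <- (rot_to_e1_dot A HA C A), <- (rot_to_e1_dot A HA C B), <- (rot_to_e1_sq_norm A HA C),
    <- (rot_to_e1_sq_norm A HA (psub B A)), rot_to_e1_psub, rot_to_e1_self in Hcond by auto.
  assert (HB' : on_S1 (rot_to_e1 A B)) by (unfold on_S1; rewrite rot_to_e1_sq_norm; auto).
  assert (HC' : in_D (rot_to_e1 A C)) by (unfold in_D; rewrite rot_to_e1_sq_norm; auto).
  assert (HB1 : rot_to_e1 A B <> (1, 0))
    by (rewrite <- (rot_to_e1_self A HA); intro E; apply HAB, (rot_to_e1_inj A HA), eq_sym, E).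
  destruct (rot_to_e1 A B) as [b1 b2]. destruct (rot_to_e1 A C) as [c1 c2].
  unfold on_S1, in_D, sq_norm in HB', HC'; simpl in HB', HC'.
  assert (Hb1 : b1 < 1) by (destruct (Req_dec b1 1) as [-> | Hne]; [exfalso; apply HB1; f_equal; nra | nra]).
  set (v := b2 / (1 - b1)).
  assert (Ebv : (b1, b2) = ((v * v - 1) / (v * v + 1), 2 * v / (v * v + 1))).
  { assert (Hv2 : v * v = (1 + b1) / (1 - b1)).
    { unfold v. apply (Rmult_eq_reg_r ((1 - b1) * (1 - b1))); [|nra]. field_simplify; [nra | lra ..]. }
    f_equal; rewrite Hv2; [|unfold v]; field; lra. }
  rewrite Ebv in Hcond |- *. apply closing_identity_normalized; auto.
Qed.

(** * The periodic orbit *)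

Section PeriodicOrbit.
Variables (A B C : pt) (p q : R).
Hypotheses (HA : on_S1 A) (HB : on_S1 B) (HAB : A <> B) (HC : in_D C).
Hypotheses (Hp : 0 < p) (Hpq : p < q) (Hq : q < 1) (Horient : 0 < cross A B C).
Hypothesis Hcond :
  4 * (1 - dot C A) * (1 - dot C B) * (q - p) = q * (1 - p) * (1 - sq_norm C) * sq_norm (psub B A).

Let P := padd A (pscale p (psub B A)).
Let Q := padd A (pscale q (psub B A)).
Let X0 := far_end C A.
Let Y := far_end C B.
Let Z := far_end P Y.

Let HP : in_D P.
Proof. apply in_D_chord; auto; lra. Qed.

Let HQ : in_D Q.
Proof. apply in_D_chord; auto; lra. Qed.

Let HX0 : on_S1 X0.
Proof. apply far_end_S1; auto. Qed.

Let HY : on_S1 Y.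
Proof. apply far_end_S1; auto. Qed.

Let HZ : on_S1 Z.
Proof. apply far_end_S1; auto. Qed.

Let EC_X0 : C = padd A (pscale (far_ratio C A) (psub X0 A)).
Proof. apply far_end_affine; auto. Qed.

Let EC_Y : C = padd B (pscale (far_ratio C B) (psub Y B)).
Proof. apply far_end_affine; auto. Qed.

Let EP_Z : P = padd Y (pscale (far_ratio P Y) (psub Z Y)).
Proof. apply far_end_affine; auto. Qed.

Let cross_AB_P : cross A B P = 0.
Proof. unfold P. rewrite cross_affine, cross_base, cross_same. ring. Qed.

Let cross_AB_Q : cross A B Q = 0.
Proof. unfold Q. rewrite cross_affine, cross_base, cross_same. ring. Qed.

Let cross_AB_X0 : 0 < cross A B X0.
Proof.
  pose proof (far_ratio_bounds A C HA HC).
  assert (cross A B C = far_ratio C A * cross A B X0)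
    by (rewrite EC_X0 at 1; rewrite cross_affine, cross_base; ring).
  nra.
Qed.

Let cross_AB_Y : 0 < cross A B Y.
Proof.
  pose proof (far_ratio_bounds B C HB HC).
  assert (cross A B C = far_ratio C B * cross A B Y)
    by (rewrite EC_Y at 1; rewrite cross_affine, cross_same; ring).
  nra.
Qed.

Let cross_AX0_Y : 0 < cross A X0 Y.
Proof.
  pose proof (far_ratio_bounds B C HB HC).
  assert (H0 : cross A X0 C = 0) by (rewrite EC_X0; rewrite cross_affine, cross_base, cross_same; ring).
  rewrite EC_Y, cross_affine, (cross_swap A X0 B) in H0. nra.
Qed.

Let cross_AB_Z : cross A B Z < 0.
Proof.
  pose proof (far_ratio_bounds Y P HY HP).
  assert (cross A B P = (1 - far_ratio P Y) * cross A B Y + far_ratio P Y * cross A B Z)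
    by (rewrite EP_Z at 1; apply cross_affine).
  nra.
Qed.

Let orbit_angles : exists a b x0 y z,
  A = circ a /\ B = circ b /\ X0 = circ x0 /\ Y = circ y /\ Z = circ z /\
  a < z < b /\ b < x0 < y /\ y < a + 1.
Proof.
  destruct (S1_circ A HA) as [a Ea].
  assert (Hangle : forall W, on_S1 W -> W <> A -> exists w, W = circ w /\ a < w < a + 1)
    by (intros W HW HWA; apply S1_circ_in; congruence).
  destruct (Hangle B HB (not_eq_sym HAB)) as [b [Eb Hb]].
  destruct (Hangle X0 HX0 (far_end_neq A C HA HC)) as [x0 [Ex0 Hx0]].
  destruct (Hangle Y HY) as [y [Ey Hy]]; [intros E; rewrite E, cross_base in cross_AB_Y; lra|].
  destruct (Hangle Z HZ) as [z [Ez Hz]]; [intros E; rewrite E, cross_base in cross_AB_Z; lra|].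
  exists a, b, x0, y, z. do 5 (split; auto).
  assert (b < x0) by (apply (circ_angle_order a); auto; rewrite <- Ea, <- Eb, <- Ex0; auto).
  assert (x0 < y) by (apply (circ_angle_order a); auto; rewrite <- Ea, <- Ex0, <- Ey; auto).
  assert (z < b) by (apply (circ_angle_order a); auto; rewrite <- Ea, <- Ez, <- Eb, cross_swap; lra).
  lra.
Qed.

Let far_end_Q_X0 : X0 <> Z -> far_end Q X0 = Z.
Proof.
  intro HXZ.
  assert (Hcr : cross X0 Z Q = 0).
  { pose proof (S1_D_sq_norm_pos Y P HY HP).
    apply (Rmult_eq_reg_r (sq_norm (psub P Y))); [|lra]. rewrite Rmult_0_l.
    unfold Z. rewrite cross_far_end_num_spec by auto. apply closing_identity; auto; lra. }
  apply far_end_of_chord with (l := dot (psub Q X0) (psub Z X0) / sq_norm (psub Z X0)); auto.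
  - intro El. pose proof (collinear_affine X0 Z Q HXZ Hcr) as EQ. rewrite El in EQ.
    assert (EQX : Q = X0) by (rewrite EQ; destruct X0; unfold padd, pscale; simpl; f_equal; ring).
    pose proof HQ as HQ'. pose proof HX0 as HX0'. unfold in_D, on_S1 in *. rewrite EQX in HQ'. lra.
  - apply collinear_affine; auto.
Qed.

Section Steps.
Variables a b x0 y z : R.
Hypotheses (Ea : A = circ a) (Eb : B = circ b) (Ex0 : X0 = circ x0) (Ey : Y = circ y) (Ez : Z = circ z).
Hypotheses (Hzb : a < z < b) (Hbx : b < x0 < y) (Hya : y < a + 1).

Let EQ_Z : Q = padd X0 (pscale (far_ratio Q X0) (psub Z X0)).
Proof.
  rewrite <- far_end_Q_X0; [apply far_end_affine; auto|].
  rewrite Ex0, Ez. apply circ_neq. lra.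
Qed.

Let lift_X0 : support_lift P Q C x0 = a + 1.
Proof.
  pose proof (far_ratio_bounds A C HA HC).
  apply (support_lift_of_psi_rel P Q C HP HQ HC); [|lra]. rewrite circ_shift1, <- Ea, <- Ex0.
  apply psi_rel_triangle_intro with (X := C); auto.
  - rewrite Ea, Ex0. apply not_eq_sym, circ_neq. lra.
  - rewrite EC_X0, cross_affine, cross_base, cross_same. ring.
  - unfold P. rewrite cross_affine, cross_same, (cross_cyc X0 A B). nra.
  - unfold Q. rewrite cross_affine, cross_same, (cross_cyc X0 A B). nra.
  - rewrite EC_X0, cross_affine, cross_base, cross_same. lra.
Qed.

Let lift_A : support_lift P Q C (a + 1) = b + 1.
Proof.
  apply (support_lift_of_psi_rel P Q C HP HQ HC); [|lra]. rewrite !circ_shift1, <- Ea, <- Eb.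
  apply psi_rel_triangle_intro with (X := P); auto; lra.
Qed.

Let lift_B : support_lift P Q C (b + 1) = y + 1.
Proof.
  pose proof (far_ratio_bounds B C HB HC).
  apply (support_lift_of_psi_rel P Q C HP HQ HC); [|lra]. rewrite !circ_shift1, <- Eb, <- Ey.
  apply psi_rel_triangle_intro with (X := C); auto.
  - rewrite Eb, Ey. apply circ_neq. lra.
  - rewrite EC_Y, cross_affine, cross_base, cross_same. ring.
  - unfold P. rewrite cross_affine, cross_base, (cross_cyc B Y A), (cross_cyc Y A B). nra.
  - unfold Q. rewrite cross_affine, cross_base, (cross_cyc B Y A), (cross_cyc Y A B). nra.
  - rewrite EC_Y, cross_affine, cross_base, cross_same. lra.
Qed.

Let lift_Y : support_lift P Q C (y + 1) = z + 2.
Proof.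
  pose proof (far_ratio_bounds B C HB HC). pose proof (far_ratio_bounds X0 Q HX0 HQ).
  assert (0 < cross Y Z X0)
    by (rewrite Ey, Ez, Ex0, <- (circ_shift1 z), <- (circ_shift1 x0); apply cross_circ_pos; lra).
  assert (0 < cross Y Z B)
    by (rewrite Ey, Ez, Eb, <- (circ_shift1 z), <- (circ_shift1 b); apply cross_circ_pos; lra).
  apply (support_lift_of_psi_rel P Q C HP HQ HC); [|lra]. rewrite circ_shift1, circ_shift2, <- Ey, <- Ez.
  apply psi_rel_triangle_intro with (X := P); auto.
  - rewrite Ey, Ez, <- (circ_shift1 z). apply circ_neq. lra.
  - rewrite EP_Z, cross_affine, cross_base, cross_same. ring.
  - rewrite EP_Z, cross_affine, cross_base, cross_same. lra.
  - rewrite EQ_Z, cross_affine, cross_same. nra.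
  - rewrite EC_Y, cross_affine, cross_base. nra.
Qed.

Let lift_Z : support_lift P Q C (z + 2) = x0 + 2.
Proof.
  pose proof (far_ratio_bounds A C HA HC). pose proof (far_ratio_bounds Y P HY HP).
  assert (0 < cross Z X0 Y) by (rewrite Ey, Ez, Ex0; apply cross_circ_pos; lra).
  assert (0 < cross Z X0 A) by (rewrite Ea, Ez, Ex0, <- (circ_shift1 a); apply cross_circ_pos; lra).
  apply (support_lift_of_psi_rel P Q C HP HQ HC); [|lra]. rewrite !circ_shift2, <- Ez, <- Ex0.
  apply psi_rel_triangle_intro with (X := Q); auto.
  - rewrite Ez, Ex0. apply circ_neq. lra.
  - rewrite EQ_Z, cross_affine, cross_base, cross_same. ring.
  - rewrite EP_Z, cross_affine, cross_base. nra.
  - rewrite EQ_Z, cross_affine, cross_base, cross_same. lra.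
  - rewrite EC_X0, cross_affine, cross_same. nra.
Qed.

Lemma support_lift_iter5 : Nat.iter 5 (support_lift P Q C) x0 = x0 + 2.
Proof. simpl. now rewrite lift_X0, lift_A, lift_B, lift_Y, lift_Z. Qed.
End Steps.

Lemma support_lift_periodic_orbit : exists x0, Nat.iter 5 (support_lift P Q C) x0 = x0 + 2.
Proof.
  destruct orbit_angles as (a & b & x0 & y & z & Ea & Eb & Ex0 & Ey & Ez & Hzb & Hbx & Hya).
  exists x0. apply (support_lift_iter5 a b x0 y z); auto.
Qed.
End PeriodicOrbit.

Lemma on_chord_sym P Q S : on_chord P Q S -> on_chord Q P S.
Proof. intros [HS Hc]. split; auto. rewrite cross_swap_base. lra. Qed.

Lemma Deltaprime_sym n P Q : in_D P -> in_D Q -> Deltaprime n P Q = Deltaprime n Q P.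
Proof. intros HP HQ. unfold Deltaprime. now rewrite dprime_sym. Qed.

Lemma Deltaprime1_pos P Q : in_D P -> in_D Q -> P <> Q -> 0 < Deltaprime 1 P Q.
Proof.
  intros HP HQ HPQ. pose proof (exp_2dprime_gt1 P Q HP HQ HPQ) as Hr.
  set (e := exp (dprime P Q)).
  assert (He : 1 < e).
  { pose proof (exp_pos (dprime P Q)).
    replace (exp (2 * dprime P Q)) with (e * e) in Hr by (unfold e; rewrite <- exp_plus; f_equal; ring).
    fold e in H. nra. }
  unfold Deltaprime. replace (INR 1 * dprime P Q) with (dprime P Q) by (simpl; ring). fold e.
  rewrite <- ln_1. apply ln_increasing; [lra|].
  apply (Rmult_lt_reg_r (e - 1)); [lra|]. field_simplify; lra.
Qed.

Lemma support_lift_periodic_orbit_of_delta P Q C : in_D P -> in_D Q -> in_D C -> P <> Q ->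
  delta_is P Q C (/ 2 * Deltaprime 1 P Q) -> exists x0, Nat.iter 5 (support_lift P Q C) x0 = x0 + 2.
Proof.
  intros HP HQ HC HPQ Hdelta.
  assert (Hpos : forall P Q, in_D P -> in_D Q -> P <> Q -> 0 < cross P Q C ->
            delta_is P Q C (/ 2 * Deltaprime 1 P Q) -> exists x0, Nat.iter 5 (support_lift P Q C) x0 = x0 + 2).
  { clear P Q HP HQ HPQ Hdelta. intros P Q HP HQ HPQ Horient Hdelta.
    destruct (delta_half_Deltaprime1_normal_form P Q C HP HQ HC HPQ Hdelta)
      as (A & B & p & q & HA & HB & HAB & [Hp Hpq] & Hq & -> & -> & Hcond).
    apply support_lift_periodic_orbit; auto.
    rewrite cross_chord_points in Horient. nra. }
  destruct (Rtotal_order 0 (cross P Q C)) as [Horient | [Horient | Horient]].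
  - apply Hpos; auto.
  - exfalso. destruct Hdelta as [_ Hmin].
    pose proof (Hmin C (conj HC (eq_sym Horient))). rewrite dprime_self in H.
    pose proof (Deltaprime1_pos P Q HP HQ HPQ). lra.
  - destruct (Hpos Q P) as [x0 Hx0]; auto.
    + rewrite cross_swap_base. lra.
    + rewrite <- Deltaprime_sym by auto. destruct Hdelta as [[S0 [HS0 Hm0]] Hmin].
      split; [exists S0; split; auto; apply on_chord_sym; auto|].
      intros S HS. apply Hmin, on_chord_sym, HS.
    + exists x0. rewrite <- Hx0. f_equal. extensionality y. unfold support_lift. now rewrite support_step_swap.
Qed.

Theorem lemma4p3 (P Q C : pt) (HP : in_D P) (HQ : in_D Q) (HC : in_D C)
  (HPQ : P <> Q)
  (Hdelta : delta_is P Q C (/ 2 * Deltaprime 1 P Q)) :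
  (exists F, is_lift_psi (filled_triangle P Q C) F) /\
  (forall F, is_lift_psi (filled_triangle P Q C) F ->
     forall x : R,
       Un_cv (fun n : nat => (Nat.iter n F x - x) / INR n) (2 / 5)).
Proof.
  split; [exists (support_lift P Q C); apply support_lift_is_lift_psi; auto|].
  intros F HF x.
  replace F with (support_lift P Q C)
    by (extensionality y; symmetry; apply (lift_psi_eq_support_lift P Q C); auto).
  destruct (support_lift_periodic_orbit_of_delta P Q C HP HQ HC HPQ Hdelta) as [x0 Hx0].
  replace (2 / 5) with (INR 2 / INR 5) by (simpl; field).
  apply (rotation_number_periodic (support_lift P Q C)) with (x0 := x0).
  - apply support_lift_monotone; auto.
  - apply support_lift_shift1.
  - intro y. unfold support_lift. pose proof (support_step_bounds P Q C y). lra.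
  - lia.
  - rewrite Hx0. simpl. ring.
Qed.
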